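(* Let $\mathbb{C}=(\mathbf{C},0,\mathbf{D},\mathcal{R})$ be a reactive system with redex IPOs and let $O$ be a set of contextual barbs. If the set of all labels (all arrows of $\mathbf{C}$) is $O$-capturing and each label is stable under barbed saturated bisimilarity $\sim^{BS}$, then IPO-bisimilarity $\sim^{I}$ coincides with $\sim^{BS}$.
   Context: A reactive system consists of a category $\mathbf{C}$, a distinguished object $0$, a composition-reflecting subcategory $\mathbf{D}$ of reactive contexts, and a set $\mathcal{R}\subseteq\bigcup_I\mathbf{C}(0,I)\times\mathbf{C}(0,I)$ of reduction rules. Terms are arrows with domain $0$; $C[P]$ denotes $C[-]\circ P$. Reduction: $P\rightsquigarrow Q$ iff $P=d\circ l$, $Q=d\circ r$ for some $\langle l,r\rangle\in\mathcal{R}$, $d\in\mathbf{D}$. For a commuting square $c_1\circ a_1=c_2\circ a_2$ with $a_1:K\to I_2$, $a_2:K\to I_3$, $c_1:I_2\to I_4$, $c_2:I_3\to I_4$, a candidate is $\langle I_5,e,f,g\rangle$ with $e\circ a_1=f\circ a_2$, $g\circ e=c_1$, $g\circ f=c_2$; an RPO is a candidate through which every other candidate $\langle I_6,e',f',g'\rangle$ factors via a unique $h:I_5\to I_6$ ($h\circ e=e'$, $h\circ f=f'$, $g'\circ h=g$); the square is an IPO if $\langle I_4,c_1,c_2,\mathrm{id}\rangle$ is an RPO. A redex square is a commuting square $C[-]\circ P=d\circ l$ with $\langle l,r\rangle\in\mathcal{R}$, $d\in\mathbf{D}$; the system has redex IPOs if every redex square has a candidate $\langle I_5,e,f,g\rangle$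 for which the square $e\circ P=f\circ l$ is an IPO. IPO transitions: $P\xrightarrow{C[-]}_I d\circ r$ if $d\in\mathbf{D}$, $\langle l,r\rangle\in\mathcal{R}$ and $C[-]\circ P=d\circ l$ is an IPO. IPO-bisimilarity $\sim^I$ is ordinary strong bisimilarity on this labelled transition system. Barbs are predicates on terms; $P\downarrow_o$ means $P$ satisfies $o\in O$. Barbed saturated bisimilarity $\sim^{BS}$ is the largest symmetric relation $\mathcal{R}'$ such that if $P\,\mathcal{R}'\,Q$ then for all arrows $C[-]$ composable with $P$: $C[P]\downarrow_o$ implies $C[Q]\downarrow_o$, and $C[P]\rightsquigarrow P'$ implies $C[Q]\rightsquigarrow Q'$ with $P'\,\mathcal{R}'\,Q'$. A barb $o$ is contextual if whenever ($P\downarrow_o$ implies $Q\downarrow_o$) then for all $C[-]$, $C[P]\downarrow_o$ implies $C[Q]\downarrow_o$. A set of labels $L$ is $O$-capturing if for each $o\in O$ there is $C[-]\in L$ such that for every term $P$, $P\downarrow_o$ iff $P\xrightarrow{C[-]}_I P'$ for some $P'$. A label $C[-]$ is stable under a relation $\mathcal{R}'$ if whenever $P\,\mathcal{R}'\,Q$ and $P\xrightarrow{C[-]}_I P'$ there is $Q'$ with $Q\xrightarrow{C[-]}_I Q'$ and $P'\,\mathcal{R}'\,Q'$. *)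

Record Category := {
  Ob : Type;
  Hom : Ob -> Ob -> Type;
  comp : forall (A B C : Ob), Hom B C -> Hom A B -> Hom A C;
  idc : forall A : Ob, Hom A A;
  comp_assoc : forall A B C D (h : Hom C D) (g : Hom B C) (f : Hom A B),
      comp A B D (comp B C D h g) f = comp A C D h (comp A B C g f);
  comp_id_l : forall A B (f : Hom A B), comp A B B (idc B) f = f;
  comp_id_r : forall A B (f : Hom A B), comp A A B f (idc A) = f
}.

Arguments Hom {c} _ _.
Arguments comp {c A B C} _ _.
Arguments idc {c} A.

Section Pushouts.
Variable Cat : Category.

Definition is_candidate {K I2 I3 I4 : Ob Cat}
  (a1 : Hom K I2) (a2 : Hom K I3) (c1 : Hom I2 I4) (c2 : Hom I3 I4)
  (I5 : Ob Cat) (e : Hom I2 I5) (f : Hom I3 I5) (g : Hom I5 I4) : Prop :=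
  comp e a1 = comp f a2 /\ comp g e = c1 /\ comp g f = c2.

Definition is_RPO {K I2 I3 I4 : Ob Cat}
  (a1 : Hom K I2) (a2 : Hom K I3) (c1 : Hom I2 I4) (c2 : Hom I3 I4)
  (I5 : Ob Cat) (e : Hom I2 I5) (f : Hom I3 I5) (g : Hom I5 I4) : Prop :=
  is_candidate a1 a2 c1 c2 I5 e f g /\
  forall (I6 : Ob Cat) (e' : Hom I2 I6) (f' : Hom I3 I6) (g' : Hom I6 I4),
    is_candidate a1 a2 c1 c2 I6 e' f' g' ->
    exists h : Hom I5 I6,
      (comp h e = e' /\ comp h f = f' /\ comp g' h = g) /\
      forall h' : Hom I5 I6,
        (comp h' e = e' /\ comp h' f = f' /\ comp g' h' = g) -> h' = h.

Definition is_IPO {K I2 I3 I4 : Ob Cat}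
  (a1 : Hom K I2) (a2 : Hom K I3) (c1 : Hom I2 I4) (c2 : Hom I3 I4) : Prop :=
  comp c1 a1 = comp c2 a2 /\ is_RPO a1 a2 c1 c2 I4 c1 c2 (idc I4).

End Pushouts.

Arguments is_candidate {Cat K I2 I3 I4} a1 a2 c1 c2 I5 e f g.
Arguments is_RPO {Cat K I2 I3 I4} a1 a2 c1 c2 I5 e f g.
Arguments is_IPO {Cat K I2 I3 I4} a1 a2 c1 c2.

Record ReactiveSystem := {
  rs_cat : Category;
  rs_zero : Ob rs_cat;
  (* the subcategory D of reactive contexts, as a predicate on arrows *)
  rs_D : forall (I J : Ob rs_cat), Hom I J -> Prop;
  rs_D_comp : forall I J K (d : Hom J K) (d' : Hom I J),
      rs_D J K d -> rs_D I J d' -> rs_D I K (comp d d');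
  rs_D_reflect : forall I J K (d : Hom J K) (d' : Hom I J),
      rs_D I K (comp d d') -> rs_D J K d /\ rs_D I J d';
  rs_rules : forall I : Ob rs_cat, Hom rs_zero I -> Hom rs_zero I -> Prop
}.

Arguments rs_D {r I J} _.
Arguments rs_rules {r I} _ _.

Section Reactive.
Variable RS : ReactiveSystem.

Notation Obj := (Ob (rs_cat RS)).
Notation Arr := (@Hom (rs_cat RS)).
Notation z := (rs_zero RS).

(* Terms are arrows with domain 0.  Relations on terms relate terms of the
   same interface (codomain), so that the same contexts apply to both. *)
Definition term_rel := forall I : Obj, Arr z I -> Arr z I -> Prop.

Definition reduces {J : Obj} (P Q : Arr z J) : Prop :=
  exists (K : Obj) (l r : Arr z K) (d : Arr K J),
    rs_rules l r /\ rs_D d /\ P = comp d l /\ Q = comp d r.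

Definition has_redex_IPOs : Prop :=
  forall (I2 I3 I4 : Obj) (P : Arr z I2) (C : Arr I2 I4)
         (l r : Arr z I3) (d : Arr I3 I4),
    rs_rules l r -> rs_D d -> comp C P = comp d l ->
    exists (I5 : Obj) (e : Arr I2 I5) (f : Arr I3 I5) (g : Arr I5 I4),
      is_candidate P l C d I5 e f g /\ is_IPO P l e f.

Definition ipo_trans {I J : Obj} (P : Arr z I) (C : Arr I J) (P' : Arr z J)
  : Prop :=
  exists (K : Obj) (l r : Arr z K) (d : Arr K J),
    rs_D d /\ rs_rules l r /\ P' = comp d r /\ is_IPO P l C d.

(* The same transition relation, for a term P and a label C that need not be
   composable a priori (then there is no transition). *)
Definition ipo_trans_any {K I J : Obj} (P : Arr z K) (C : Arr I J)
  (P' : Arr z J) : Prop :=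
  exists H : K = I, ipo_trans (eq_rect K (fun X => Arr z X) P I H) C P'.

Definition ipo_bisimulation (R : term_rel) : Prop :=
  forall (I : Obj) (P Q : Arr z I), R I P Q ->
    (forall (J : Obj) (C : Arr I J) (P' : Arr z J), ipo_trans P C P' ->
       exists Q', ipo_trans Q C Q' /\ R J P' Q') /\
    (forall (J : Obj) (C : Arr I J) (Q' : Arr z J), ipo_trans Q C Q' ->
       exists P', ipo_trans P C P' /\ R J P' Q').

Definition ipo_bisim : term_rel :=
  fun I P Q => exists R : term_rel, ipo_bisimulation R /\ R I P Q.

Section Barbs.
Variable O : Type.
Variable barb : O -> forall I : Obj, Arr z I -> Prop.

Definition symmetric_rel (R : term_rel) : Prop :=
  forall I P Q, R I P Q -> R I Q P.

Definition bs_bisimulation (R : term_rel) : Prop :=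
  symmetric_rel R /\
  forall (I : Obj) (P Q : Arr z I), R I P Q ->
    forall (J : Obj) (C : Arr I J),
      (forall o : O, barb o J (comp C P) -> barb o J (comp C Q)) /\
      (forall P' : Arr z J, reduces (comp C P) P' ->
         exists Q', reduces (comp C Q) Q' /\ R J P' Q').

Definition bs_bisim : term_rel :=
  fun I P Q => exists R : term_rel, bs_bisimulation R /\ R I P Q.

Definition contextual_barb (o : O) : Prop :=
  forall (I : Obj) (P Q : Arr z I),
    (barb o I P -> barb o I Q) ->
    forall (J : Obj) (C : Arr I J), barb o J (comp C P) -> barb o J (comp C Q).

Definition all_labels_O_capturing : Prop :=
  forall o : O, exists (I J : Obj) (C : Arr I J),
    forall (K : Obj) (P : Arr z K),
      barb o K P <-> exists P' : Arr z J, ipo_trans_any P C P'.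

End Barbs.

Definition label_stable {I J : Obj} (C : Arr I J) (R : term_rel) : Prop :=
  forall (P Q : Arr z I) (P' : Arr z J), R I P Q -> ipo_trans P C P' ->
    exists Q', ipo_trans Q C Q' /\ R J P' Q'.

End Reactive.

Arguments reduces {RS J} P Q.
Arguments ipo_trans {RS I J} P C P'.
Arguments ipo_trans_any {RS K I J} P C P'.


(* IPO-bisimilarity is closed under contexts on the nose: a reduction of C[P]
   factors, by a redex IPO, through an IPO transition P --e-->_I P'' whose
   label e is a prefix of C, and the matching transition of Q rebuilds a
   reduction of C[Q].  Barbs are captured by labels and contextual, so the
   context closure of ~I is a barbed saturated bisimulation.  Conversely,
   stability of all labels says exactly that ~BS is an IPO-bisimulation. *)

Section Coincidence.
Variable RS : ReactiveSystem.
Variable O : Type.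
Variable barb : O -> forall I : Ob (rs_cat RS), Hom (rs_zero RS) I -> Prop.

Notation Obj := (Ob (rs_cat RS)).
Notation term I := (Hom (rs_zero RS) I).

Lemma ipo_bisim_sym : symmetric_rel RS (ipo_bisim RS).
Proof.
  intros I P Q [R [HR HPQ]].
  exists (fun I P Q => R I Q P). split; [|exact HPQ].
  intros I0 P0 Q0 H. destruct (HR _ _ _ H) as [Hfw Hbw]. split; intros J C T Ht.
  - destruct (Hbw _ _ _ Ht) as [T' [Ht' HR']]. eauto.
  - destruct (Hfw _ _ _ Ht) as [T' [Ht' HR']]. eauto.
Qed.

Lemma bs_bisim_sym : symmetric_rel RS (bs_bisim RS O barb).
Proof.
  intros I P Q [R [[Hsym HR] HPQ]]. exists R. split; [split|]; auto.
Qed.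

Lemma ipo_bisim_trans {I J : Obj} (P Q : term I) (C : Hom I J) (P' : term J) :
  ipo_bisim RS I P Q -> ipo_trans P C P' ->
  exists Q', ipo_trans Q C Q' /\ ipo_bisim RS J P' Q'.
Proof.
  intros [R [HR HPQ]] Ht.
  destruct (proj1 (HR _ _ _ HPQ) _ _ _ Ht) as [Q' [HQ' HR']].
  exists Q'. split; [exact HQ'|]. exists R. auto.
Qed.

Lemma ipo_bisim_barb :
  all_labels_O_capturing RS O barb ->
  forall (o : O) (I : Obj) (P Q : term I),
    ipo_bisim RS I P Q -> barb o I P -> barb o I Q.
Proof.
  intros Hcap o I P Q HPQ HP.
  destruct (Hcap o) as [Io [Jo [Co HCo]]].
  apply HCo in HP. destruct HP as [P' [E Ht]].
  apply HCo. destruct E. simpl in Ht.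
  destruct (ipo_bisim_trans P Q Co P' HPQ Ht) as [Q' [HQ' _]].
  exists Q', eq_refl. exact HQ'.
Qed.

Lemma reduces_ctx_ipo_trans :
  has_redex_IPOs RS ->
  forall (I J : Obj) (P : term I) (C : Hom I J) (P' : term J),
    reduces (comp C P) P' ->
    exists (K : Obj) (e : Hom I K) (g : Hom K J) (P'' : term K),
      ipo_trans P e P'' /\ rs_D g /\ comp g e = C /\ P' = comp g P''.
Proof.
  intros Hred I J P C P' [K [l [r [d [Hrule [Hd [Heq ->]]]]]]].
  destruct (Hred _ _ _ P C l r d Hrule Hd Heq)
    as [I5 [e [f [g [[_ [HgeC Hgf]] Hipo]]]]].
  subst d. destruct (rs_D_reflect _ _ _ _ _ _ Hd) as [Hg Hf].
  exists I5, e, g, (comp f r). repeat split; auto.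
  - exists K, l, r, f. auto.
  - apply comp_assoc.
Qed.

Lemma ipo_trans_ctx_reduces {I K J : Obj} (Q : term I) (e : Hom I K)
    (g : Hom K J) (Q' : term K) :
  ipo_trans Q e Q' -> rs_D g -> reduces (comp (comp g e) Q) (comp g Q').
Proof.
  intros [K' [l [r [d [Hd [Hrule [-> [Hsq _]]]]]]]] Hg.
  exists K', l, r, (comp g d). repeat split; auto.
  - apply rs_D_comp; auto.
  - rewrite !comp_assoc, Hsq. reflexivity.
  - symmetry. apply comp_assoc.
Qed.

Definition ctx_closure (R : term_rel RS) : term_rel RS := fun I P Q =>
  exists (J : Obj) (g : Hom J I) (P0 Q0 : term J),
    R J P0 Q0 /\ P = comp g P0 /\ Q = comp g Q0.

Lemma ctx_closure_refl (R : term_rel RS) (I : Obj) (P Q : term I) :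
  R I P Q -> ctx_closure R I P Q.
Proof.
  intros HPQ. exists I, (idc I), P, Q. rewrite !comp_id_l. auto.
Qed.

Lemma ctx_closure_sym (R : term_rel RS) :
  symmetric_rel RS R -> symmetric_rel RS (ctx_closure R).
Proof.
  intros Hsym I P Q [J [g [P0 [Q0 [HR [-> ->]]]]]].
  exists J, g, Q0, P0. auto.
Qed.

Lemma ctx_closure_ipo_bisim_bs_bisimulation :
  has_redex_IPOs RS ->
  (forall o : O, contextual_barb RS O barb o) ->
  all_labels_O_capturing RS O barb ->
  bs_bisimulation RS O barb (ctx_closure (ipo_bisim RS)).
Proof.
  intros Hred Hctx Hcap.
  split; [apply ctx_closure_sym, ipo_bisim_sym|].
  intros I P Q [J [g [P0 [Q0 [HPQ [-> ->]]]]]] J' C. split.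
  - intros o Ho. rewrite <- comp_assoc in Ho |- *.
    exact (Hctx o J P0 Q0 (ipo_bisim_barb Hcap o J P0 Q0 HPQ) _ _ Ho).
  - intros P' Hr. rewrite <- comp_assoc in Hr.
    destruct (reduces_ctx_ipo_trans Hred _ _ P0 (comp C g) P' Hr)
      as [K [e [g' [P'' [Ht [Hg' [HCg ->]]]]]]].
    destruct (ipo_bisim_trans P0 Q0 e P'' HPQ Ht) as [Q'' [HtQ HPQ'']].
    exists (comp g' Q''). split.
    + rewrite <- comp_assoc, <- HCg.
      exact (ipo_trans_ctx_reduces Q0 e g' Q'' HtQ Hg').
    + exists K, g', P'', Q''. auto.
Qed.

Lemma ipo_bisim_sub_bs_bisim :
  has_redex_IPOs RS ->
  (forall o : O, contextual_barb RS O barb o) ->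
  all_labels_O_capturing RS O barb ->
  forall (I : Obj) (P Q : term I),
    ipo_bisim RS I P Q -> bs_bisim RS O barb I P Q.
Proof.
  intros Hred Hctx Hcap I P Q HPQ.
  exists (ctx_closure (ipo_bisim RS)). split.
  - exact (ctx_closure_ipo_bisim_bs_bisimulation Hred Hctx Hcap).
  - exact (ctx_closure_refl _ I P Q HPQ).
Qed.

Lemma bs_bisim_ipo_bisimulation :
  (forall (I J : Obj) (C : Hom I J), label_stable RS C (bs_bisim RS O barb)) ->
  ipo_bisimulation RS (bs_bisim RS O barb).
Proof.
  intros Hst I P Q HPQ. split.
  - intros J C P' Ht. exact (Hst _ _ C _ _ _ HPQ Ht).
  - intros J C Q' Ht.
    destruct (Hst _ _ C _ _ _ (bs_bisim_sym _ _ _ HPQ) Ht) as [P' [HtP HQP]].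
    exists P'. split; [exact HtP | exact (bs_bisim_sym _ _ _ HQP)].
Qed.

End Coincidence.

Theorem mainTheorem3 (RS : ReactiveSystem) (O : Type)
  (barb : O -> forall I : Ob (rs_cat RS), Hom (rs_zero RS) I -> Prop) :
  has_redex_IPOs RS ->
  (forall o : O, contextual_barb RS O barb o) ->
  all_labels_O_capturing RS O barb ->
  (forall (I J : Ob (rs_cat RS)) (C : Hom I J),
      label_stable RS C (bs_bisim RS O barb)) ->
  forall (I : Ob (rs_cat RS)) (P Q : Hom (rs_zero RS) I),
    ipo_bisim RS I P Q <-> bs_bisim RS O barb I P Q.
Proof.
  intros Hred Hctx Hcap Hst I P Q. split.
  - exact (ipo_bisim_sub_bs_bisim RS O barb Hred Hctx Hcap I P Q).
  - intros HPQ. exists (bs_bisim RS O barb).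
    split; [exact (bs_bisim_ipo_bisimulation RS O barb Hst) | exact HPQ].
Qed.
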